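(* Let $a\ge 1$ and $n=2^a$. If $\mathcal{S}$ is an $n\times n$ unitary-weight single-symbol decodable STBC transmitting $k$ independent complex symbols over $n$ channel uses, then its rate satisfies $$\frac{k}{2^a}\le\frac{2a}{2^a}=\frac{a}{2^{a-1}}.$$
   Context: A linear square STBC with $k$ complex symbols is given by $2k$ weight matrices $A_{iI},A_{iQ}\in\mathbb{C}^{n\times n}$ ($1\le i\le k$), linearly independent over $\mathbb{R}$, with codewords $S=\sum_{i=1}^k(x_{iI}A_{iI}+x_{iQ}A_{iQ})$, $x_i=x_{iI}+jx_{iQ}$ ranging over a complex constellation; its rate is $k/n$ complex symbols per channel use. It is a unitary-weight single-symbol decodable (SSD) code if: (i) $A_{iI}^HA_{iI}=A_{iQ}^HA_{iQ}=I_n$ for all $i$; (ii) for all $1\le i\ne j\le k$: $A_{iI}^HA_{jQ}+A_{jQ}^HA_{iI}=O_n$, $A_{iI}^HA_{jI}+A_{jI}^HA_{iI}=O_n$, $A_{iQ}^HA_{jQ}+A_{jQ}^HA_{iQ}=O_n$; and (iii) it is not the case that $A_{iI}^HA_{iQ}+A_{iQ}^HA_{iI}=O_n$ for all $i=1,\dots,k$. *)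

From HB Require Import structures.
From mathcomp Require Import all_boot all_order all_algebra.
From mathcomp Require Import complex.
From mathcomp Require Import reals.
Set Implicit Arguments. Unset Strict Implicit. Unset Printing Implicit Defensive.
Import Order.TTheory GRing.Theory Num.Theory.
Local Open Scope ring_scope.

Definition hconj (R : realType) (n : nat) (A : 'M[R[i]]_n) : 'M[R[i]]_n :=
  (map_mx Num.conj A)^T.

Definition lin_indep_R (R : realType) (n k : nat)
  (AI AQ : 'I_k -> 'M[R[i]]_n) : Prop :=
  forall cI cQ : 'I_k -> R,
    \sum_(i < k) ((cI i)%:C%C *: AI i + (cQ i)%:C%C *: AQ i) = 0 ->
    forall i, cI i = 0 /\ cQ i = 0.

Definition unitary_weight_SSD (R : realType) (n k : nat)
  (AI AQ : 'I_k -> 'M[R[i]]_n) : Prop :=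
  [/\ lin_indep_R AI AQ,
      (forall i, hconj (AI i) *m AI i = 1%:M /\ hconj (AQ i) *m AQ i = 1%:M),
      (forall i j, i != j ->
         [/\ hconj (AI i) *m AQ j + hconj (AQ j) *m AI i = 0,
             hconj (AI i) *m AI j + hconj (AI j) *m AI i = 0 &
             hconj (AQ i) *m AQ j + hconj (AQ j) *m AQ i = 0]) &
      ~ (forall i, hconj (AI i) *m AQ i + hconj (AQ i) *m AI i = 0)].

From HB Require Import structures.
From mathcomp Require Import all_boot all_order all_algebra.
From mathcomp Require Import complex.
From mathcomp Require Import reals.
From mathcomp Require Import ring.
Set Implicit Arguments. Unset Strict Implicit. Unset Printing Implicit Defensive.
Import Order.TTheory GRing.Theory Num.Theory.
Local Open Scope ring_scope.
(* Suppose [k > 2 a].  Multiplying every weight on the left by [AI i0 ^H] for one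
   index [i0] preserves the SSD relations and turns [2 a] of the in-phase weights into
   pairwise anticommuting skew-Hermitian unitaries [g_l].  Their [2 ^ (2 a) = n ^ 2]
   ordered products are trace-orthogonal, hence a basis of all [n x n] matrices, so a
   matrix anticommuting with every [g_l] except [g_j] lies in the span of [g_j] and of
   the full product [gtop], which anticommutes with all [g_l].  Two normalized
   quadrature weights are of this kind and anticommute with each other; this kills the
   [gtop]-component of one of them, which is then a multiple of its in-phase partner,
   real because both are skew-Hermitian, against the real linear independence of the
   weights. *)

Section HermitianAdjoint.
Variables (R : realType) (n : nat).
Local Notation M := 'M[R[i]]_n.

Lemma hconjK (A : M) : hconj (hconj A) = A.
Proof. by apply/matrixP => i j; rewrite !mxE conjCK. Qed.

Lemma hconjM (A B : M) : hconj (A *m B) = hconj B *m hconj A.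
Proof.
apply/matrixP => i j; rewrite !mxE rmorph_sum; apply: eq_bigr => l _.
by rewrite !mxE rmorphM mulrC.
Qed.

Lemma hconjZ c (A : M) : hconj (c *: A) = c^* *: hconj A.
Proof. by apply/matrixP => i j; rewrite !mxE rmorphM. Qed.

Lemma hconj1 : hconj (1%:M : M) = 1%:M.
Proof. by apply/matrixP => i j; rewrite !mxE conjC_nat eq_sym. Qed.

Lemma mxtrace_hconj (A : M) : \tr (hconj A) = (\tr A)^*.
Proof. by rewrite /hconj mxtrace_tr /mxtrace rmorph_sum; under eq_bigr do rewrite mxE. Qed.

Lemma mxtrace_hconj_mul_eq0 (A : M) : \tr (hconj A *m A) = 0 -> A = 0.
Proof.
have conj_mul_ge0 (z : R[i]) : 0 <= z^* * z by rewrite mulrC mul_conjC_ge0.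
move=> trA0; apply/matrixP => i j; rewrite mxE.
have : \sum_(q < n) \sum_(p < n) (A p q)^* * A p q = 0.
  rewrite -[RHS]trA0 /mxtrace; apply: eq_bigr => q _; rewrite mxE.
  by apply: eq_bigr => p _; rewrite !mxE.
move/eqP; rewrite psumr_eq0 => [|q _]; last exact: sumr_ge0.
move/allP/(_ j (mem_index_enum _)) => /=; rewrite psumr_eq0 // => /allP.
by move/(_ i (mem_index_enum _)); rewrite /= mulrC mul_conjC_eq0 => /eqP.
Qed.

Lemma scalar1_mx_neq0 : (0 < n)%N -> (1%:M : M) != 0.
Proof.
move=> n_gt0; apply/eqP => /matrixP /(_ (Ordinal n_gt0) (Ordinal n_gt0)).
by rewrite !mxE eqxx => /eqP; rewrite oner_eq0.
Qed.

Lemma unitary_neq0 (A : M) : (0 < n)%N -> hconj A *m A = 1%:M -> A != 0.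
Proof.
by move=> n_gt0 uA; apply: contra_eq_neq uA => ->; rewrite mulmx0 eq_sym scalar1_mx_neq0.
Qed.

(* Conjugating by the unitary [G] maps [W] to [- W], and conjugation preserves the trace. *)
Lemma anticomm_mxtrace_eq0 (G W : M) :
  hconj G *m G = 1%:M -> G *m W = - (W *m G) -> \tr W = 0.
Proof.
move=> uG GW; apply/eqP; rewrite -eqNr; apply/eqP.
have trW : \tr W = \tr (hconj G *m (W *m G)).
  by rewrite mxtrace_mulC -mulmxA (mulmx1C uG) mulmx1.
have WG : W *m G = - (G *m W) by rewrite GW opprK.
by rewrite {2}trW WG mulmxN mulmxA uG mul1mx raddfN.
Qed.

Lemma trace_orthogonal_card (T : finType) (f : T -> M) :
  (forall x y, x != y -> \tr (hconj (f x) *m f y) = 0) ->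
  (forall x, f x != 0) -> (#|T| <= n * n)%N.
Proof.
move=> orth f_neq0.
pose X := [tuple f (enum_val i) | i < #|T|].
have freeX : free X.
  apply/freeP => c sum0 i.
  have := congr1 (fun Z => \tr (hconj X`_i *m Z)) sum0.
  rewrite mulmx0 raddf0 mulmx_sumr raddf_sum /= (bigD1 i) //= big1 => [|p pi].
    rewrite addr0 -scalemxAr mxtraceZ nth_mktuple => /eqP; rewrite mulf_eq0.
    by case/orP=> [/eqP // | /eqP/mxtrace_hconj_mul_eq0/eqP]; rewrite (negbTE (f_neq0 _)).
  rewrite -scalemxAr mxtraceZ !nth_mktuple orth ?mulr0 //.
  by rewrite (inj_eq enum_val_inj) eq_sym.
have := dimvS (subvf (span X)).
by move/eqP: freeX => ->; rewrite dimvf /= size_map size_enum_ord.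
Qed.

Lemma hconj_mul_unitary (U A B : M) : U *m hconj U = 1%:M ->
  hconj (hconj U *m A) *m (hconj U *m B) = hconj A *m B.
Proof. by move=> uU; rewrite hconjM hconjK -mulmxA (mulmxA U) uU mul1mx. Qed.

Lemma hconj_mul_skew (U A : M) : hconj U *m A + hconj A *m U = 0 ->
  hconj (hconj U *m A) = - (hconj U *m A).
Proof. by rewrite hconjM hconjK addrC => /eqP; rewrite addr_eq0 => /eqP. Qed.

Lemma skew_anticomm (x y : M) : hconj x = - x -> hconj y = - y ->
  hconj x *m y + hconj y *m x = 0 -> x *m y = - (y *m x).
Proof.
move=> skx sky; rewrite skx sky !mulNmx => /eqP; rewrite addr_eq0 opprK => /eqP <-.
by rewrite opprK.
Qed.

Lemma skew_scale_real (c : R[i]) (A : M) : hconj A = - A -> A != 0 ->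
  hconj (c *: A) = - (c *: A) -> exists x : R, c = x%:C%C.
Proof.
move=> skA A_neq0; rewrite hconjZ skA scalerN => /oppr_inj /eqP.
rewrite -subr_eq0 -scalerBl scaler_eq0 (negbTE A_neq0) orbF subr_eq0.
case: c => x y /= /eqP [] yN; exists x.
by move/eqP: yN; rewrite eqNr => /eqP ->.
Qed.

End HermitianAdjoint.
Section Anticommutator.
Variables (F : comNzRingType) (n : nat).
Local Notation M := 'M[F]_n.

Definition anticommutator (x y : M) := x *m y + y *m x.

Lemma anticommutatorDl x y z :
  anticommutator (x + y) z = anticommutator x z + anticommutator y z.
Proof. by rewrite /anticommutator mulmxDl mulmxDr addrACA. Qed.

Lemma anticommutatorDr x y z :
  anticommutator x (y + z) = anticommutator x y + anticommutator x z.
Proof. by rewrite /anticommutator mulmxDl mulmxDr addrACA. Qed.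

Lemma anticommutatorZl c x y : anticommutator (c *: x) y = c *: anticommutator x y.
Proof. by rewrite /anticommutator -scalemxAl -scalemxAr scalerDr. Qed.

Lemma anticommutatorZr c x y : anticommutator x (c *: y) = c *: anticommutator x y.
Proof. by rewrite /anticommutator -scalemxAl -scalemxAr scalerDr. Qed.

Lemma anticommutator_eq0 x y : x *m y = - (y *m x) -> anticommutator x y = 0.
Proof. by move=> xy; rewrite /anticommutator xy addNr. Qed.

End Anticommutator.
Section CliffordSystem.
Variables (R : realType) (n m : nat).
Local Notation M := 'M[R[i]]_n.
Variable g : 'I_m -> M.
Hypothesis g_skew : forall l, hconj (g l) = - g l.
Hypothesis g_unitary : forall l, hconj (g l) *m g l = 1%:M.
Hypothesis g_anticomm : forall l l', l != l' -> g l *m g l' = - (g l' *m g l).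

Definition gprod (s : seq 'I_m) : M := foldr (fun l A => g l *m A) 1%:M s.
Definition gmono (U : {set 'I_m}) : M := gprod (enum U).
Definition gtop : M := gmono setT.

(* [g l] anticommutes with [gmono U] exactly when [gparity U l] holds. *)
Definition gparity (U : {set 'I_m}) (l : 'I_m) : bool := odd #|U| (+) (l \in U).

Lemma gprod_comm l s :
  g l *m gprod s = (-1) ^+ count (fun j => j != l) s *: (gprod s *m g l).
Proof.
elim: s => [|j s IHs] /=; first by rewrite expr0 scale1r mulmx1 mul1mx.
rewrite mulmxA; case: (eqVneq j l) => [->|jl] /=.
  by rewrite add0n -mulmxA [in LHS]IHs -scalemxAr mulmxA.
rewrite g_anticomm 1?eq_sym // mulNmx -[in LHS]mulmxA IHs -scalemxAr mulmxA.
by rewrite exprS mulN1r scaleNr.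
Qed.

Lemma gmono_comm l U : g l *m gmono U = (-1) ^+ gparity U l *: (gmono U *m g l).
Proof.
rewrite /gmono gprod_comm /gparity -signr_odd; congr ((-1) ^+ _ *: _).
have := count_predC (pred1 l) (enum U).
rewrite count_uniq_mem ?enum_uniq // mem_enum -cardE => <-.
by rewrite oddD oddb addbC addbA addbb.
Qed.

Lemma gmono_hconj_comm l U :
  g l *m hconj (gmono U) = (-1) ^+ gparity U l *: (hconj (gmono U) *m g l).
Proof.
have := congr1 (@hconj R n) (gmono_comm l U).
rewrite hconjM hconjZ hconjM rmorph_sign g_skew mulmxN mulNmx scalerN.
by move=> /oppr_inj ->; rewrite scalerA -signr_addb addbb scale1r.
Qed.

Lemma gmono_unitary U : hconj (gmono U) *m gmono U = 1%:M.
Proof.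
rewrite /gmono; elim: (enum U) => [|j s IHs] /=; first by rewrite hconj1 mulmx1.
by rewrite hconjM -mulmxA (mulmxA (hconj (g j))) g_unitary mul1mx IHs.
Qed.

Lemma gmono1 j : gmono [set j] = g j.
Proof. by rewrite /gmono enum_set1 /= mulmx1. Qed.

Lemma gmono_mxtrace_eq0 l U X (b : bool) :
  g l *m X = (-1) ^+ b *: (X *m g l) -> gparity U l != b ->
  \tr (hconj (gmono U) *m X) = 0.
Proof.
move=> glX Ub; apply: (anticomm_mxtrace_eq0 (g_unitary l)).
rewrite mulmxA gmono_hconj_comm -scalemxAl -mulmxA glX scalemxAr scalerA.
by rewrite -signr_addb -negb_eqb Ub expr1 scaleN1r mulmxN mulmxA.
Qed.

Hypothesis m_even : ~~ odd m.

Lemma gtop_anticomm l : g l *m gtop = - (gtop *m g l).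
Proof.
by rewrite gmono_comm /gparity cardsT card_ord in_setT (negbTE m_even) expr1 scaleN1r.
Qed.

Lemma gparity_separates (U V : {set 'I_m}) : U != V ->
  exists l, gparity U l != gparity V l.
Proof.
move=> UV; apply/existsP; apply: contraNT UV; rewrite negb_exists => /forallP sameUV.
have sameU l : (l \in U) = (odd #|U| (+) odd #|V| (+) (l \in V)).
  by move: (sameUV l); rewrite negbK /gparity => /eqP e; rewrite -addbA -e addbA addbb.
case: (eqVneq (odd #|U|) (odd #|V|)) => [oddUV|oddUV].
  by apply/eqP/setP => l; rewrite sameU oddUV addbb.
have UC : U = ~: V by apply/setP => l; rewrite sameU in_setC -[odd _ (+) _]negb_eqb oddUV.
have := cardsC V; rewrite -UC card_ord => cardVU.
have : ~~ odd (#|V| + #|U|) by rewrite cardVU.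
by rewrite oddD; move: oddUV; case: odd; case: odd.
Qed.

Lemma gparity_vanishes j (U : {set 'I_m}) : U != [set j] -> U != setT ->
  exists2 l, l != j & ~~ gparity U l.
Proof.
move=> Uj UT; rewrite /gparity; case/boolP: (odd #|U|) => oddU.
  have : ~~ (U \subset [set j]).
    rewrite subset1 negb_or Uj; apply: contraTN oddU => /eqP ->.
    by rewrite cards0.
  by case/subsetPn => l lU; rewrite in_set1 => lj; exists l; rewrite ?lU.
have : ~~ (~: U \subset [set j]).
  rewrite subset1 negb_or; apply/andP; split.
    apply: contraNN oddU => /eqP UCj; have := cardsC U.
    rewrite UCj cards1 card_ord addn1 => m_eq.
    have : ~~ odd #|U|.+1 by rewrite m_eq.
    by rewrite /= negbK.
  by apply: contraNneq UT => /(congr1 (@setC _)); rewrite setCK setC0 => ->.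
by case/subsetPn => l; rewrite in_setC in_set1 => lU lj; exists l; rewrite // (negbTE lU).
Qed.

Lemma gmono_orthogonal (U V : {set 'I_m}) : U != V ->
  \tr (hconj (gmono V) *m gmono U) = 0.
Proof.
move=> UV; have [l UVl] := gparity_separates UV.
by apply: (gmono_mxtrace_eq0 (gmono_comm l U)); rewrite eq_sym.
Qed.

Lemma anticomm_gmono_mxtrace_eq0 j X (U : {set 'I_m}) :
  (forall l, l != j -> g l *m X = - (X *m g l)) ->
  U != [set j] -> U != setT -> \tr (hconj (gmono U) *m X) = 0.
Proof.
move=> Xanti U1 UT; have [l lj Ul] := gparity_vanishes U1 UT.
by apply: (@gmono_mxtrace_eq0 l U X true); [rewrite Xanti // scaleN1r | rewrite eqb_id].
Qed.

Hypothesis dim_eq : (2 ^ m = n * n)%N.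

Lemma dim_gt0 : (0 < n)%N.
Proof. by move: (expn_gt0 2 m); rewrite dim_eq muln_gt0 => /andP[]. Qed.

(* A nonzero matrix orthogonal to the [2 ^ m = n * n] orthogonal monomials would give
   too large an orthogonal family. *)
Lemma gmono_expansion X :
  X = \sum_(U : {set 'I_m}) (\tr (hconj (gmono U) *m X) / n%:R) *: gmono U.
Proof.
have n_neq0 : (n%:R : R[i]) != 0 by rewrite pnatr_eq0 -lt0n dim_gt0.
apply/eqP; rewrite -subr_eq0; apply/eqP; set Y := _ - _.
have orthY U : \tr (hconj (gmono U) *m Y) = 0.
  rewrite /Y mulmxBr raddfB mulmx_sumr (raddf_sum (@mxtrace _ n)) (bigD1 U) //=.
  rewrite big1 => [|V VU].
    by rewrite addr0 -scalemxAr mxtraceZ gmono_unitary mxtrace1 divfK // subrr.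
  by rewrite -scalemxAr mxtraceZ gmono_orthogonal ?mulr0.
apply/eqP; apply: contraT => Y_neq0.
pose f (o : option {set 'I_m}) := if o is Some U then gmono U else Y.
have := @trace_orthogonal_card R n _ f.
rewrite card_option -cardsT -powersetT card_powerset cardsT card_ord dim_eq ltnn.
apply=> [[U|] [V|] //= UV|[U|] //=]; last exact: unitary_neq0 dim_gt0 (gmono_unitary U).
  by apply: gmono_orthogonal; apply: contraNneq UV => ->.
by rewrite -[LHS]conjCK -mxtrace_hconj hconjM hconjK orthY conjC0.
Qed.

Lemma anticomm_decomp j X : [set j] != setT ->
  (forall l, l != j -> g l *m X = - (X *m g l)) ->
  exists a b, X = a *: g j + b *: gtop.
Proof.
move=> jT Xanti; rewrite (gmono_expansion X) (bigD1 [set j]) // (bigD1 setT) 1?eq_sym //=.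
rewrite big1 ?addr0 => [|U /andP[Uj UT]]; first by rewrite gmono1; do 2 eexists.
by rewrite (anticomm_gmono_mxtrace_eq0 Xanti Uj UT) mul0r scale0r.
Qed.

Lemma set1_neq_setT (j j' : 'I_m) : j' != j -> [set j] != setT.
Proof. by move=> j'j; apply/negP => /eqP jT; move: (in_setT j'); rewrite -jT in_set1 (negbTE j'j). Qed.

Lemma anticommutator_gtop_neq0 : anticommutator gtop gtop != 0.
Proof.
have gtopU := gmono_unitary setT; rewrite -/gtop in gtopU.
have : hconj gtop *m (hconj gtop *m anticommutator gtop gtop) = (2 : R[i]) *: 1%:M.
  by rewrite /anticommutator !mulmxDr (mulmxA _ gtop gtop) gtopU mul1mx gtopU scaler_nat.
apply: contra_eq_neq => ->; rewrite !mulmx0 eq_sym scaler_eq0.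
by rewrite pnatr_eq0 (negbTE (scalar1_mx_neq0 _ dim_gt0)).
Qed.

(* With [e0 = a0 g j0 + b0 gtop] and [e1 = a1 g j1 + b1 gtop], the anticommutator of
   [e0] and [e1] reduces to [b0 b1] times that of [gtop] with itself. *)
Lemma anticomm_pair_collinear j0 j1 e0 e1 : j0 != j1 ->
  (forall l, l != j0 -> g l *m e0 = - (e0 *m g l)) ->
  (forall l, l != j1 -> g l *m e1 = - (e1 *m g l)) ->
  e0 *m e1 = - (e1 *m e0) ->
  (exists c, e0 = c *: g j0) \/ (exists c, e1 = c *: g j1).
Proof.
move=> j01 e0anti e1anti e01; have j10 : j1 != j0 by rewrite eq_sym.
have [a0 [b0 E0]] := anticomm_decomp (set1_neq_setT j10) e0anti.
have [a1 [b1 E1]] := anticomm_decomp (set1_neq_setT j01) e1anti.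
have gtop_g1 : gtop *m g j1 = - (g j1 *m gtop) by rewrite gtop_anticomm opprK.
have := anticommutator_eq0 e01.
rewrite E0 E1 !anticommutatorDl !anticommutatorDr !anticommutatorZl !anticommutatorZr.
rewrite (anticommutator_eq0 (g_anticomm j01)) (anticommutator_eq0 (gtop_anticomm _)).
rewrite (anticommutator_eq0 gtop_g1) !scaler0 !add0r scalerA => /eqP.
rewrite scaler_eq0 (negbTE anticommutator_gtop_neq0) orbF mulf_eq0.
by case/orP=> /eqP ->; [left; exists a0 | right; exists a1]; rewrite scale0r addr0.
Qed.

End CliffordSystem.
Section NormalizedWeights.
Variables (R : realType) (n k : nat) (AI AQ : 'I_k -> 'M[R[i]]_n).
Hypothesis unitary : forall i, hconj (AI i) *m AI i = 1%:M /\ hconj (AQ i) *m AQ i = 1%:M.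
Hypothesis cross : forall i j, i != j ->
  [/\ hconj (AI i) *m AQ j + hconj (AQ j) *m AI i = 0,
      hconj (AI i) *m AI j + hconj (AI j) *m AI i = 0 &
      hconj (AQ i) *m AQ j + hconj (AQ j) *m AQ i = 0].
Variable i0 : 'I_k.

(* Left multiplication by [AI i0 ^H] preserves all the conditions and makes the
   remaining weight matrices skew-Hermitian. *)
Definition weightI i := hconj (AI i0) *m AI i.
Definition weightQ i := hconj (AI i0) *m AQ i.

Let AI0_unitary : AI i0 *m hconj (AI i0) = 1%:M.
Proof. by apply: mulmx1C; case: (unitary i0). Qed.

Lemma weightI_unitary i : hconj (weightI i) *m weightI i = 1%:M.
Proof. by rewrite /weightI hconj_mul_unitary //; case: (unitary i). Qed.

Lemma weightI_skew i : i != i0 -> hconj (weightI i) = - weightI i.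
Proof. by rewrite eq_sym => /cross[_ + _]; apply: hconj_mul_skew. Qed.

Lemma weightQ_skew i : i != i0 -> hconj (weightQ i) = - weightQ i.
Proof. by rewrite eq_sym => /cross[+ _ _]; apply: hconj_mul_skew. Qed.

Lemma weightI_anticomm i j : i != i0 -> j != i0 -> i != j ->
  weightI i *m weightI j = - (weightI j *m weightI i).
Proof.
move=> i_i0 j_i0 ij; apply: skew_anticomm (weightI_skew i_i0) (weightI_skew j_i0) _.
by rewrite /weightI /weightQ !hconj_mul_unitary //; case: (cross ij).
Qed.

Lemma weightIQ_anticomm i j : i != i0 -> j != i0 -> i != j ->
  weightI i *m weightQ j = - (weightQ j *m weightI i).
Proof.
move=> i_i0 j_i0 ij; apply: skew_anticomm (weightI_skew i_i0) (weightQ_skew j_i0) _.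
by rewrite /weightI /weightQ !hconj_mul_unitary //; case: (cross ij).
Qed.

Lemma weightQ_anticomm i j : i != i0 -> j != i0 -> i != j ->
  weightQ i *m weightQ j = - (weightQ j *m weightQ i).
Proof.
move=> i_i0 j_i0 ij; apply: skew_anticomm (weightQ_skew i_i0) (weightQ_skew j_i0) _.
by rewrite /weightI /weightQ !hconj_mul_unitary //; case: (cross ij).
Qed.

Lemma weightQ_not_collinear i c : (0 < n)%N -> lin_indep_R AI AQ -> i != i0 ->
  weightQ i <> c *: weightI i.
Proof.
move=> n_gt0 indep i_i0 QI.
have [x c_eq] : exists x : R, c = x%:C%C.
  apply: (skew_scale_real (weightI_skew i_i0)).
    exact: unitary_neq0 n_gt0 (weightI_unitary i).
  by rewrite -QI weightQ_skew.
have AQ_AI : AQ i = c *: AI i.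
  by move: (congr1 (mulmx (AI i0)) QI); rewrite -scalemxAr !mulmxA AI0_unitary !mul1mx.
pose cI j : R := if j == i then - x else 0.
pose cQ j : R := if j == i then 1 else 0.
suff /indep/(_ i)[_] : \sum_(j < k) ((cI j)%:C%C *: AI j + (cQ j)%:C%C *: AQ j) = 0.
  by rewrite /cQ eqxx => /eqP; rewrite oner_eq0.
rewrite (bigD1 i) //= big1 => [|j /negbTE ji]; last by rewrite /cI /cQ ji !scale0r addr0.
by rewrite /cI /cQ eqxx addr0 AQ_AI c_eq rmorphN scaleNr scale1r addNr.
Qed.

End NormalizedWeights.

Lemma unitary_weight_SSD_card (R : realType) (a k : nat)
    (AI AQ : 'I_k -> 'M[R[i]]_(2 ^ a)) :
  (1 <= a)%N -> unitary_weight_SSD AI AQ -> (k <= 2 * a)%N.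
Proof.
move=> a_ge1 [indep unitary cross _]; rewrite leqNgt; apply/negP => ak.
pose i0 : 'I_k := Ordinal ak.
pose f (l : 'I_(2 * a)) : 'I_k := widen_ord (ltnW ak) l.
have f_i0 l : f l != i0 by rewrite -val_eqE /= neq_ltn ltn_ord.
have f_inj l l' : l != l' -> f l != f l' by [].
pose g l := weightI AI i0 (f l); pose e l := weightQ AI AQ i0 (f l).
have m_gt1 : (1 < 2 * a)%N by rewrite (leq_mul2l 2 1 a) a_ge1.
pose j0 : 'I_(2 * a) := Ordinal (ltnW m_gt1); pose j1 : 'I_(2 * a) := Ordinal m_gt1.
have j01 : j0 != j1 by rewrite -val_eqE.
have m_even : ~~ odd (2 * a) by rewrite oddM.
have dim_eq : (2 ^ (2 * a) = 2 ^ a * 2 ^ a)%N by rewrite mul2n -addnn expnD.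
have e_anti j l : l != j -> g l *m e j = - (e j *m g l).
  by move=> lj; have := weightIQ_anticomm unitary cross (f_i0 l) (f_i0 j) (f_inj l j lj).
have := anticomm_pair_collinear (g := g) (fun l => weightI_skew cross (f_i0 l))
  (fun l => weightI_unitary unitary i0 (f l))
  (fun l l' ll' => weightI_anticomm unitary cross (f_i0 l) (f_i0 l') (f_inj l l' ll'))
  m_even dim_eq j01 (e_anti j0) (e_anti j1)
  (weightQ_anticomm unitary cross (f_i0 j0) (f_i0 j1) (f_inj _ _ j01)).
by case=> [][c]; apply: weightQ_not_collinear; rewrite ?expn_gt0 ?f_i0.
Qed.

Theorem theorem1 (R : realType) (a k : nat) (AI AQ : 'I_k -> 'M[R[i]]_(2 ^ a)) :
  (1 <= a)%N ->
  unitary_weight_SSD AI AQ ->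
  (k%:R / (2 ^ a)%:R <= (2 * a)%:R / (2 ^ a)%:R :> R) /\
  ((2 * a)%:R / (2 ^ a)%:R = a%:R / (2 ^ a.-1)%:R :> R).
Proof.
move=> a_ge1 ssd; split.
  by rewrite ler_wpM2r ?invr_ge0 ?ler0n // ler_nat (unitary_weight_SSD_card a_ge1 ssd).
have -> : (2 ^ a = 2 * 2 ^ a.-1)%N by rewrite -expnS prednK.
by rewrite !natrM; field; rewrite pnatr_eq0 -lt0n expn_gt0.
Qed.
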